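(* Given a closure operator $k$ on $\mathcal{L}$ such that $\mathcal{L}(p(x)) \subseteq k^*(\mathcal{L})$ for all $x$, if $k_p(\ell) \neq k_p(\jmath)$ then $k(\ell) \neq k(\jmath)$.
   Context: $\mathcal{L}$ is a security lattice (ordered by $\sqsubseteq$, with joins $\sqcup$) that also has greatest lower bounds (meets). Programs $p$ are partial functions from $\mathcal{P}(I \times \mathcal{L})$ to $\mathcal{P}(O \times \mathcal{L})$; $\mathcal{L}(x) = \{\ell \mid a^\ell \in x\}$ is the set of labels in $x$. A closure operator $k : \mathcal{L} \to \mathcal{L}$ is extensive ($\ell \sqsubseteq k(\ell)$), monotone, and idempotent; $k^*(S) = \{k(s) \mid s \in S\}$. $k_p(\ell)$ is the greatest lower bound (meet) of $\{\jmath \mid \exists x.\ \jmath \in \mathcal{L}(p(x)) \wedge \ell \sqsubseteq \jmath\}$. *)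

From HB Require Import structures.
From mathcomp Require Import all_boot all_order.
Set Implicit Arguments. Unset Strict Implicit. Unset Printing Implicit Defensive.
Import Order.TTheory.
Local Open Scope order_scope.

(* Sets are predicates; a labelled datum a^l is a pair (a, l). *)

Definition labels (A : Type) (L : Type) (x : A * L -> Prop) : L -> Prop :=
  fun l => exists a, x (a, l).

Definition is_glb d (L : porderType d) (S : L -> Prop) (g : L) : Prop :=
  (forall s, S s -> g <= s) /\ (forall m, (forall s, S s -> m <= s) -> m <= g).

Definition closure_op d (L : porderType d) (k : L -> L) : Prop :=
  (forall l, l <= k l) /\ (forall l j, l <= j -> k l <= k j) /\
  (forall l, k (k l) = k l).

Definition program (I O L : Type) := (I * L -> Prop) -> option (O * L -> Prop).

Definition kp d (L : porderType d) (glb : (L -> Prop) -> L) (I O : Type)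
  (p : program I O L) (l : L) : L :=
  glb (fun j => exists x y, p x = Some y /\ labels y j /\ l <= j).

From HB Require Import structures.
From mathcomp Require Import all_boot all_order.
Import Order.TTheory.
Local Open Scope order_scope.

(* Every label a program can output is closed under k, and for a closed
   label c we have l <= c iff k l <= c. Hence l and k l have the same set of
   admissible upper labels, so k_p l = k_p (k l), and k_p factors through k. *)

Lemma is_glb_eq {d} {L : porderType d} (S1 S2 : L -> Prop) (g1 g2 : L) :
  (forall s, S1 s <-> S2 s) -> is_glb S1 g1 -> is_glb S2 g2 -> g1 = g2.
Proof.
move=> eqS [lb1 great1] [lb2 great2]; apply: le_anti; apply/andP; split.
- by apply: great2 => s /eqS; apply: lb1.
- by apply: great1 => s /eqS; apply: lb2.
Qed.

Lemma closure_le_closed {d} {L : porderType d} (k : L -> L) (l s : L) :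
  closure_op k -> l <= k s -> k l <= k s.
Proof. by move=> [_ [mono idem]] le_ls; rewrite -(idem s); apply: mono. Qed.

Lemma kp_closure {d} {L : porderType d} {glb : (L -> Prop) -> L}
    {I O : Type} {p : program I O L} {k : L -> L} :
  (forall S, is_glb S (glb S)) -> closure_op k ->
  (forall x y, p x = Some y -> forall j, labels y j -> exists s, j = k s) ->
  forall l, kp glb p (k l) = kp glb p l.
Proof.
move=> glbP kP closed_labels l; apply: is_glb_eq (glbP _) (glbP _) => s.
split=> -[x [y [pxy [ys le_s]]]]; exists x, y; split=> //; split=> //.
- exact: le_trans (kP.1 l) le_s.
- have [t eq_s] := closed_labels x y pxy s ys.
  by rewrite eq_s in le_s *; apply: closure_le_closed.
Qed.

Theorem mainTheorem18 (d : Order.disp_t) (L : latticeType d) (glb : (L -> Prop) -> L)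
  (Hglb : forall S : L -> Prop, is_glb S (glb S))
  (I O : Type) (p : program I O L) (k : L -> L)
  (Hk : closure_op k)
  (Hrange : forall x y, p x = Some y ->
     forall j, labels y j -> exists s : L, j = k s)
  (l j : L) :
  kp glb p l <> kp glb p j -> k l <> k j.
Proof.
move=> kp_neq k_eq; apply: kp_neq.
by rewrite -(kp_closure Hglb Hk Hrange l) k_eq kp_closure.
Qed.
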